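(* Let $(Q,\cdot)$ be a quasigroup and $e\in Q$ an element such that $(ee\cdot xz)(ey\cdot z)=xy$ for all $x,y,z\in Q$. Then for all $x,y,z\in Q$: (1) $ee=e$; (2) $ex=xe$; (3) $ex\cdot ey=e\cdot yx$; (4) $e(ey\cdot ex)=xy$; (5) $(e\cdot xz)(ey\cdot z)=xy$; (6) $x\cdot xe=ex\cdot x=e$; (7) $xy\cdot x=x\cdot yx=y$.
   Context: A quasigroup is a magma in which $ax=b$ and $ya=b$ have unique solutions for all $a,b$. Juxtaposition denotes the operation, and $ab\cdot cd$ means $(ab)(cd)$. Such $(Q,\cdot,e)$ is called a double Ward quasigroup. *)

Definition is_quasigroup {Q : Type} (mul : Q -> Q -> Q) : Prop :=
  (forall a b : Q, exists! x : Q, mul a x = b) /\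
  (forall a b : Q, exists! y : Q, mul y a = b).


(* Instances of the identity at left quotients
   first give [ee = e]; then [x = y = e] gives [ev·v = e], and substituting
   this back gives [e(ey·z) = ez·y].  Hence [x ↦ ex] is an involution
   commuting with right multiplication by [e], and the remaining identities
   follow by rewriting and left cancellation. *)

Lemma quasigroup_mul_left_inj {Q : Type} (mul : Q -> Q -> Q) :
  is_quasigroup mul -> forall a x y : Q, mul a x = mul a y -> x = y.
Proof.
  intros [hL _] a x y Hxy.
  destruct (hL a (mul a x)) as [u [_ Hu]].
  rewrite <- (Hu x eq_refl). apply Hu. now symmetry.
Qed.

Lemma quasigroup_left_div {Q : Type} (mul : Q -> Q -> Q) :
  is_quasigroup mul -> forall a b : Q, exists x : Q, mul a x = b.
Proof.
  intros [hL _] a b. destruct (hL a b) as [u [Hu _]]. now exists u.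
Qed.

Section DoubleWard.

Variables (Q : Type) (mul : Q -> Q -> Q) (e : Q).
Hypothesis mul_left_inj : forall a x y : Q, mul a x = mul a y -> x = y.
Hypothesis left_div : forall a b : Q, exists x : Q, mul a x = b.
Hypothesis ward : forall x y z : Q,
  mul (mul (mul e e) (mul x z)) (mul (mul e y) z) = mul x y.

Lemma mul_ee : mul e e = e.
Proof.
  set (f := mul e e) in *.
  assert (fff : mul (mul f f) f = e).
  { destruct (left_div e e) as [y Hy].
    pose proof (ward e y e) as H. now rewrite Hy in H. }
  assert (fe : mul f e = e).
  { destruct (left_div f f) as [z Hz].
    pose proof (ward f e z) as H. fold f in H. now rewrite Hz, fff in H. }
  destruct (left_div f e) as [z Hz].
  pose proof (ward f e z) as H. fold f in H.
  now rewrite Hz, fe in H.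
Qed.

Lemma ward_e : forall x y z : Q,
  mul (mul e (mul x z)) (mul (mul e y) z) = mul x y.
Proof. intros x y z. pose proof (ward x y z) as H. now rewrite mul_ee in H. Qed.

Lemma mul_ex_x : forall x : Q, mul (mul e x) x = e.
Proof.
  intro x. destruct (left_div e x) as [z Hz].
  pose proof (ward_e e e z) as H. now rewrite mul_ee, Hz in H.
Qed.

Lemma mul_e_swap : forall y z : Q, mul e (mul (mul e y) z) = mul (mul e z) y.
Proof.
  intros y z. pose proof (ward_e (mul e z) y z) as H.
  now rewrite mul_ex_x, mul_ee in H.
Qed.

Lemma mul_ex_e : forall y : Q, mul (mul e y) e = y.
Proof.
  intro y. apply (mul_left_inj e).
  pose proof (ward_e e y e) as H. now rewrite !mul_ee in H.
Qed.

Lemma mul_eK : forall x : Q, mul e (mul e x) = x.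
Proof.
  intro x. pose proof (mul_e_swap e x) as H. now rewrite mul_ee, mul_ex_e in H.
Qed.

Lemma mul_e_comm : forall x : Q, mul e x = mul x e.
Proof.
  intro x. rewrite <- (mul_ex_e (mul e x)). now rewrite mul_eK.
Qed.

Lemma mul_e_mul_e : forall x y : Q, mul e (mul (mul e y) (mul e x)) = mul x y.
Proof. intros x y. now rewrite mul_e_swap, mul_eK. Qed.

Lemma mul_e_mul : forall x y : Q, mul (mul e x) (mul e y) = mul e (mul y x).
Proof. intros x y. now rewrite <- (mul_e_mul_e y x), mul_eK. Qed.

Lemma mul_x_yx : forall x y : Q, mul x (mul y x) = y.
Proof.
  intros x y. pose proof (ward_e e (mul e y) x) as H.
  now rewrite !mul_eK in H.
Qed.

Lemma mul_xy_x : forall x y : Q, mul (mul x y) x = y.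
Proof. intros x y. apply (mul_left_inj x). apply mul_x_yx. Qed.

End DoubleWard.

Theorem lemma4p1 (Q : Type) (mul : Q -> Q -> Q) (e : Q)
  (hQ : is_quasigroup mul)
  (hW : forall x y z : Q,
      mul (mul (mul e e) (mul x z)) (mul (mul e y) z) = mul x y) :
  mul e e = e /\
  (forall x : Q, mul e x = mul x e) /\
  (forall x y : Q, mul (mul e x) (mul e y) = mul e (mul y x)) /\
  (forall x y : Q, mul e (mul (mul e y) (mul e x)) = mul x y) /\
  (forall x y z : Q, mul (mul e (mul x z)) (mul (mul e y) z) = mul x y) /\
  (forall x : Q, mul x (mul x e) = e /\ mul (mul e x) x = e) /\
  (forall x y : Q, mul (mul x y) x = y /\ mul x (mul y x) = y).
Proof.
  pose proof (quasigroup_mul_left_inj mul hQ) as inj.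
  pose proof (quasigroup_left_div mul hQ) as div.
  repeat split; intros.
  - now apply mul_ee.
  - now apply mul_e_comm.
  - now apply mul_e_mul.
  - now apply mul_e_mul_e.
  - now apply ward_e.
  - replace (mul x e) with (mul e x) by now apply mul_e_comm.
    now apply mul_x_yx with (e := e).
  - now apply mul_ex_x.
  - now apply mul_xy_x with (e := e).
  - now apply mul_x_yx with (e := e).
Qed.
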